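(* Let $A$ be a finite set of alternatives with $|A|\ge 3$, let $N=\{1,\dots,n\}$ with $n\ge 2$, and let $\mathbb{D}$ be a minimally rich domain of linear orders over $A$. If every unanimous and locally strategy-proof social choice function $f:\mathbb{D}^n\to A$ satisfies dictatorship, then $\mathbb{D}$ is connected with two distinct neighbours.
   Context: A domain is a set $\mathbb{D}$ of linear orders (strict preferences) over $A$; a preference profile is $P=(P_1,\dots,P_n)\in\mathbb{D}^n$. For a linear order $P_i$, $r_k(P_i)$ is its $k$-th ranked alternative. $\mathbb{D}$ is minimally rich if every $a\in A$ is ranked first in some $P_i\in\mathbb{D}$. Two linear orders $P_i,P_i'$ are adjacent ($P_i\sim P_i'$) if $P_i'$ is obtained from $P_i$ by swapping two consecutively ranked alternatives and leaving all other ranks unchanged. A social choice function (scf) is a map $f:\mathbb{D}^n\to A$. It is unanimous if $f(P)=a$ whenever every voter ranks $a$ first. It is locally strategy-proof if there is no voter $i$, profile $P$, and $P_i'\in\mathbb{D}$ with $P_i'\sim P_i$ such that $f(P_i',P_{-i})\,P_i\,f(P_i,P_{-i})$. It satisfies dictatorship if there is a voter $i$ with $f(P)=r_1(P_i)$ for all $P\in\mathbb{D}^n$. A path in $\mathbb{D}$ is a sequence of distinct preferences in $\mathbb{D}$ in which consecutive ones are adjacent; $\mathbb{D}$ is connected if any two of its preferences are joined by a path in $\mathbb{D}$. For $\bar{\mathbb{D}}\subseteq\mathbb{D}$, a neighbour of $\bar{\mathbb{D}}$ in $\mathbb{D}$ is a $P_i\in\mathbb{D}\setminus\bar{\mathbb{D}}$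 adjacent to some element of $\bar{\mathbb{D}}$. Two preferences $P_i,P_i'\in\mathbb{D}$ are top-connected in $\mathbb{D}$ if there is a path from $P_i$ to $P_i'$ in $\mathbb{D}$ all of whose members have the same top-ranked alternative. The top-connected closure $\mathbb{D}^{TCC}(P_i)$ is the set of preferences in $\mathbb{D}$ top-connected to $P_i$, together with $P_i$. $\mathbb{D}$ is connected with two distinct neighbours if (1) $\mathbb{D}$ is connected, and (2) for every $P_i\in\mathbb{D}$ there exist two neighbours $P_i',P_i''$ of $\mathbb{D}^{TCC}(P_i)$ in $\mathbb{D}$ with $r_1(P_i')\ne r_1(P_i'')$. *)

From mathcomp Require Import all_boot.
Set Implicit Arguments. Unset Strict Implicit. Unset Printing Implicit Defensive.

Section SCF.
Variable A : finType.

(* A linear order (strict preference) over A is represented by the list of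
   all alternatives from best to worst: r_k(P) = nth _ P (k-1). *)
Definition linear_order (s : seq A) : bool := perm_eq s (enum A).

Definition top (s : seq A) : option A := ohead s.

Definition prefers (s : seq A) (x y : A) : bool := index x s < index y s.

Definition adjacent (s t : seq A) : Prop :=
  exists (l1 l2 : seq A) (a b : A), a != b /\
    s = l1 ++ a :: b :: l2 /\ t = l1 ++ b :: a :: l2.

Definition is_domain (D : pred (seq A)) : Prop :=
  forall s, D s -> linear_order s.

Definition minimally_rich (D : pred (seq A)) : Prop :=
  forall a : A, exists s, D s /\ top s = Some a.

Fixpoint adj_chain (x : seq A) (p : seq (seq A)) : Prop :=
  match p with
  | [::] => True
  | y :: q => adjacent x y /\ adj_chain y q
  end.

Definition is_path (D : pred (seq A)) (x : seq A) (p : seq (seq A)) : Prop :=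
  uniq (x :: p) /\ all D (x :: p) /\ adj_chain x p.

Definition connected (D : pred (seq A)) : Prop :=
  forall s t, D s -> D t -> exists p, is_path D s p /\ last s p = t.

Definition top_connected (D : pred (seq A)) (s t : seq A) : Prop :=
  exists p, is_path D s p /\ last s p = t /\
            all (fun u => top u == top s) (s :: p).

Definition TCC (D : pred (seq A)) (s : seq A) (t : seq A) : Prop :=
  t = s \/ top_connected D s t.

Definition neighbour (D : pred (seq A)) (S : seq A -> Prop) (t : seq A) : Prop :=
  D t /\ ~ S t /\ exists u, S u /\ adjacent u t.

Definition connected_two_neighbours (D : pred (seq A)) : Prop :=
  connected D /\
  forall s, D s -> exists t1 t2,
    neighbour D (TCC D s) t1 /\ neighbour D (TCC D s) t2 /\ top t1 <> top t2.

Variable n : nat.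
Notation profile := {ffun 'I_n -> seq A}.

Definition in_domain (D : pred (seq A)) (P : profile) : Prop := forall i, D (P i).

Definition deviate (P : profile) (i : 'I_n) (s : seq A) : profile :=
  [ffun j => if j == i then s else P j].

Definition unanimous (D : pred (seq A)) (f : profile -> A) : Prop :=
  forall P a, in_domain D P -> (forall i, top (P i) = Some a) -> f P = a.

Definition locally_strategy_proof (D : pred (seq A)) (f : profile -> A) : Prop :=
  forall P i s, in_domain D P -> D s -> adjacent (P i) s ->
    ~ prefers (P i) (f (deviate P i s)) (f P).

Definition dictatorship (D : pred (seq A)) (f : profile -> A) : Prop :=
  exists i, forall P, in_domain D P -> Some (f P) = top (P i).

End SCF.

From mathcomp Require Import all_boot boolp zify.
Set Implicit Arguments. Unset Strict Implicit. Unset Printing Implicit Defensive.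

(* Both properties are proved by contraposition, using one rule in which only
   voters 0 and 1 matter: voter 0 dictates unless her preference lies in a set S,
   in which case voter 1 decides through a one-voter rule h.  This rule is
   unanimous and locally strategy-proof as long as no adjacent step out of S
   yields voter 0 a better outcome, and it is not dictatorial as soon as S and its
   complement are inhabited and h can overrule voter 0.
   If D is disconnected, S is a connected component and h is voter 1's top: S
   cannot be left at all.  If every neighbour of the top-connected closure S of a
   preference with top a has the same top b, h picks voter 1's favourite among a
   and b: leaving S turns the outcome into b, which voter 0 (who ranks a first)
   does not prefer to the old outcome a or b. *)

Section Reachability.
Variable A : finType.
Implicit Types (s t u : seq A) (E D : pred (seq A)).

(* A classical boolean reflection of [adjacent], so that [path] and [shortenP] apply. *)
Definition adjacentb s t : bool := `[< adjacent s t >].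

Lemma adj_chain_path s p : adj_chain s p <-> path adjacentb s p.
Proof.
elim: p s => [|t p IHp] s //=.
split=> [[adj /IHp->] | /andP[/asboolP adj /IHp]] //.
by rewrite andbT; apply/asboolP.
Qed.

Definition reachable E s t : Prop :=
  exists p, [/\ path adjacentb s p, all E (s :: p) & last s p = t].

Lemma reachable_refl E s : E s -> reachable E s s.
Proof. by move=> Es; exists [::]; rewrite /= Es. Qed.

Lemma reachable_step E s u u' :
  reachable E s u -> E u' -> adjacent u u' -> reachable E s u'.
Proof.
move=> [p [pth allE <-]] Eu' adj; exists (rcons p u').
by rewrite rcons_path -rcons_cons all_rcons last_rcons pth allE Eu'; split=> //; apply/asboolP.
Qed.

Lemma reachable_in E s t : reachable E s t -> E t.
Proof. by move=> [p [_ /allP allE <-]]; apply/allE/mem_last. Qed.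

Lemma reachable_path E s t : reachable E s t -> exists p, is_path E s p /\ last s p = t.
Proof.
move=> [p [pth /= /andP[Es allE] <-]].
case: (shortenP pth) => p' pth' uniq' sub'.
exists p'; split=> //; split=> //; split; last exact/adj_chain_path.
by rewrite /= Es; apply/allP=> u /sub' /(allP allE).
Qed.

Lemma connected_reachable D :
  (forall s t, D s -> D t -> reachable D s t) -> connected D.
Proof. by move=> reach s t Ds Dt; apply/reachable_path/reach. Qed.

Definition same_top D s : pred (seq A) := fun u => D u && (top u == top s).

Lemma TCC_reachable D s u : D s -> TCC D s u <-> reachable (same_top D s) s u.
Proof.
move=> Ds; split=> [[->|[p [[_ [allD chain]] [<- allTop]]]] | reach].
- by apply: reachable_refl; rewrite /same_top Ds eqxx.
- exists p; split=> //; first exact/adj_chain_path.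
  by apply/allP=> w pw; rewrite /same_top (allP allD w pw) (allP allTop w pw).
- have [p [[uniq_p [allS chain]] <-]] := reachable_path reach.
  by right; exists p; do !split=> //; apply: sub_all allS => w /andP[].
Qed.

Lemma TCC_same_top D s u : D s -> TCC D s u -> D u /\ top u = top s.
Proof. by move=> Ds /(TCC_reachable _ Ds) /reachable_in /andP[Du /eqP]. Qed.

Lemma neighbour_TCC_top D s t : D s -> neighbour D (TCC D s) t -> top t <> top s.
Proof.
move=> Ds [Dt [notTCC [u [/(TCC_reachable _ Ds) reach adj]]]] same.
apply/notTCC/(TCC_reachable _ Ds); apply: (reachable_step reach _ adj).
by rewrite /same_top Dt same eqxx.
Qed.

End Reachability.

Section Preferences.
Variable A : finType.
Implicit Types (s t u : seq A) (D : pred (seq A)).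

Lemma prefers_irrefl t x : ~ prefers t x x.
Proof. by rewrite /prefers ltnn. Qed.

Lemma not_prefers_head x0 t y : ~ prefers t y (head x0 t).
Proof. by case: t => [|x t]; rewrite /prefers //= eqxx ltn0. Qed.

Lemma top_head x0 t x : top t = Some x -> head x0 t = x.
Proof. by case: t => //= y t [->]. Qed.

Lemma domain_top D x0 t : is_domain D -> 0 < #|A| -> D t -> top t = Some (head x0 t).
Proof.
move=> dom A_gt0 /dom /perm_size; rewrite -cardT.
by case: t => [A0 | //]; rewrite -A0 in A_gt0.
Qed.

Lemma exists_neq (x : A) : 1 < #|A| -> exists y, y != x.
Proof.
move=> A_gt1; have /card_gt0P[y] : 0 < #|predC1 x| by rewrite cardC1 ltn_predRL.
by rewrite inE; exists y.
Qed.

Lemma exists_top_neq D u : is_domain D -> minimally_rich D -> 1 < #|A| -> D u ->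
  exists v, D v /\ top v <> top u.
Proof.
move=> dom rich A_gt1 Du; have /card_gt0P[x0 _] := ltnW A_gt1.
have [y yx] := exists_neq (head x0 u) A_gt1; have [v [Dv topv]] := rich y.
exists v; split=> //; rewrite topv (domain_top x0 dom (ltnW A_gt1) Du) => -[/eqP].
exact/negP.
Qed.

Definition better_of t (a b : A) : A := if prefers t b a then b else a.

Lemma better_of_maximal t t' a b : ~ prefers t (better_of t' a b) (better_of t a b).
Proof. by rewrite /better_of /prefers; case: ifP; case: ifP; lia. Qed.

Lemma better_of_top t a b c : top t = Some c -> c \in [:: a; b] -> better_of t a b = c.
Proof.
case: t => [|x t] //= [<-]; rewrite !inE /better_of /prefers /=.
by case/orP=> /eqP->; rewrite eqxx ?ltn0 //; case: eqP => [->|].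
Qed.

End Preferences.

Definition dictatorial_domain (A : finType) (n : nat) (D : pred (seq A)) : Prop :=
  forall f : {ffun 'I_n -> seq A} -> A,
    unanimous D f -> locally_strategy_proof D f -> dictatorship D f.

Section SwitchRule.
Variables (A : finType) (D : pred (seq A)) (S : seq A -> Prop) (h : seq A -> A).
Variables (x0 : A) (n : nat).
Hypothesis n_gt1 : 1 < n.

Let i0 : 'I_n := Ordinal (ltnW n_gt1).
Let i1 : 'I_n := Ordinal n_gt1.

Definition switch_rule (P : {ffun 'I_n -> seq A}) : A :=
  if `[< S (P i0) >] then h (P i1) else head x0 (P i0).

Hypothesis h_unanimous : forall s t x, S s -> top s = Some x -> top t = Some x -> h t = x.
Hypothesis h_local_sp : forall t t', adjacent t t' -> ~ prefers t (h t') (h t).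
Hypothesis exit_not_better : forall u u' t,
  S u -> D u' -> adjacent u u' -> ~ S u' -> ~ prefers u (head x0 u') (h t).

Lemma switch_rule_unanimous : unanimous D switch_rule.
Proof.
move=> P x _ topP; rewrite /switch_rule; case: asboolP => [SP|_].
  exact: h_unanimous SP (topP i0) (topP i1).
exact: top_head.
Qed.

Lemma switch_rule_local_sp : locally_strategy_proof D switch_rule.
Proof.
move=> P i s _ Ds adj; rewrite /switch_rule !ffunE.
case: (eqVneq i i0) adj => [-> | i_neq] adj.
- rewrite (negbTE (_ : i1 != i0)) //.
  case: (asboolP (S (P i0))) => SP; last exact: not_prefers_head.
  by case: asboolP => Ss; [exact: prefers_irrefl | exact: exit_not_better].
- case: asboolP => SP; last exact: prefers_irrefl.
  by case: (eqVneq i1 i) adj => [-> | _] adj; [exact: h_local_sp | exact: prefers_irrefl].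
Qed.

Lemma switch_rule_not_dictatorship :
  (exists s0 t0, [/\ D s0, S s0, D t0 & Some (h t0) <> top s0]) ->
  (exists u v, [/\ D u, ~ S u, D v & top v <> Some (head x0 u)]) ->
  ~ dictatorship D switch_rule.
Proof.
move=> [s0 [t0 [Ds0 Ss0 Dt0 neq0]]] [u [v [Du Su Dv neq]]] [i dict].
pose P (a b : seq A) : {ffun 'I_n -> seq A} := [ffun j => if j == i0 then a else b].
have P_i0 a b : P a b i0 = a by rewrite ffunE eqxx.
have P_neq a b j : j != i0 -> P a b j = b by rewrite ffunE => /negbTE->.
have P_in a b : D a -> D b -> in_domain D (P a b) by move=> Da Db j; rewrite ffunE; case: ifP.
case: (eqVneq i i0) dict => [-> | i_neq] dict.
  have := dict _ (P_in _ _ Ds0 Dt0); rewrite /switch_rule !P_i0 P_neq //.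
  by case: asboolP.
have := dict _ (P_in _ _ Du Dv); rewrite /switch_rule P_i0 !P_neq //.
by case: asboolP => // _ /esym/neq.
Qed.

Lemma switch_rule_not_dictatorial_domain :
  (exists s0 t0, [/\ D s0, S s0, D t0 & Some (h t0) <> top s0]) ->
  (exists u v, [/\ D u, ~ S u, D v & top v <> Some (head x0 u)]) ->
  ~ dictatorial_domain n D.
Proof.
move=> wS wSc dict; apply: (switch_rule_not_dictatorship wS wSc).
exact: dict switch_rule_unanimous switch_rule_local_sp.
Qed.

End SwitchRule.

Section DictatorialDomains.
Variables (A : finType) (n : nat) (D : pred (seq A)).
Hypotheses (A_gt1 : 1 < #|A|) (n_gt1 : 1 < n).
Hypotheses (dom : is_domain D) (rich : minimally_rich D) (dict : dictatorial_domain n D).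

Lemma dictatorial_domain_connected : connected D.
Proof.
apply: connected_reachable => s t Ds Dt; apply: contrapT => unreachable.
have A_gt0 := ltnW A_gt1; have /card_gt0P[x0 _] := A_gt0.
have [t0 [Dt0 top_t0]] := exists_top_neq dom rich A_gt1 Ds.
have [v [Dv top_v]] := exists_top_neq dom rich A_gt1 Dt.
apply: (switch_rule_not_dictatorial_domain (S := reachable D s) (h := head x0) (x0 := x0)
  n_gt1 _ _ _ _ _ dict).
- by move=> ? u x _ _; apply: top_head.
- by move=> u u' _; apply: not_prefers_head.
- move=> u u' ? reach Du' adj unreachable'.
  by case: unreachable'; apply: reachable_step reach Du' adj.
- exists s, t0; split=> //; first exact: reachable_refl.
  by rewrite -(domain_top x0 dom A_gt0 Dt0).
- by exists t, v; rewrite -(domain_top x0 dom A_gt0 Dt).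
Qed.

Lemma dictatorial_domain_two_neighbours s : D s ->
  exists t1 t2, neighbour D (TCC D s) t1 /\ neighbour D (TCC D s) t2 /\ top t1 <> top t2.
Proof.
move=> Ds; apply: contrapT => one_top.
have A_gt0 := ltnW A_gt1; have /card_gt0P[x0 _] := A_gt0.
have top_s := domain_top x0 dom A_gt0 Ds; set a := head x0 s in top_s.
have [b [ba top_nb]] : exists b, b != a /\ forall t, neighbour D (TCC D s) t -> top t = Some b.
  case: (pselect (exists t, neighbour D (TCC D s) t)) => [[t1 nb1] | none].
    exists (head x0 t1); have top_t1 := domain_top x0 dom A_gt0 nb1.1.
    split=> [|t2 nb2]; last first.
      by rewrite -top_t1; apply: contrapT => ne; apply: one_top; exists t2, t1.
    by apply/eqP => e; apply: (neighbour_TCC_top Ds nb1); rewrite top_t1 e.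
  have [b ba] := exists_neq a A_gt1; exists b; split=> // t nb.
  by case: none; exists t.
have [t0 [Dt0 top_t0]] := rich b.
apply: (switch_rule_not_dictatorial_domain (S := TCC D s) (h := fun t => better_of t a b)
  (x0 := x0) n_gt1 _ _ _ _ _ dict).
- move=> ? t x /(TCC_same_top Ds)[_ ->]; rewrite top_s => -[<-] top_t.
  by apply: better_of_top; rewrite ?inE ?eqxx.
- by move=> t t' _; apply: better_of_maximal.
- move=> u u' t Tu Du' adj notTCC.
  have [_] := TCC_same_top Ds Tu; rewrite top_s => /(top_head x0) head_u.
  have top_u' : top u' = Some b by apply: top_nb; split=> //; split=> //; exists u.
  rewrite (top_head x0 top_u') /better_of; case: ifP => _; first exact: prefers_irrefl.
  by rewrite -head_u; apply: not_prefers_head.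
- exists s, t0; split=> //; first by left.
  rewrite (better_of_top top_t0) ?inE ?eqxx ?orbT // top_s => -[/eqP].
  exact/negP.
- exists t0, s; split=> //.
    by move/(TCC_same_top Ds) => [_]; rewrite top_t0 top_s => -[/eqP]; apply/negP.
  by rewrite top_s (top_head x0 top_t0) => -[ab]; rewrite ab eqxx in ba.
Qed.

End DictatorialDomains.

Theorem theorem1 (A : finType) (n : nat) (D : pred (seq A)) :
  3 <= #|A| -> 2 <= n ->
  is_domain D -> minimally_rich D ->
  (forall f : {ffun 'I_n -> seq A} -> A,
      unanimous D f -> locally_strategy_proof D f -> dictatorship D f) ->
  connected_two_neighbours D.
Proof.
move=> A_gt2 n_gt1 dom rich dict; have A_gt1 := ltnW A_gt2.
split; first exact: dictatorial_domain_connected A_gt1 n_gt1 dom rich dict.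
exact: dictatorial_domain_two_neighbours A_gt1 n_gt1 dom rich dict.
Qed.
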